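(* For all $1\leq n<\omega$, $\Theta_n\geq\aleph_n$.
   Context: For $1\leq n<\omega$, $\Theta_n$ is the least cardinal $\theta$ such that for every function $f:\theta^n\to\omega$ there is a sequence $\langle A_i\mid i<n\rangle$ of infinite subsets of $\theta$ such that $f\restriction\prod_{i<n}A_i$ is constant. *)

From Stdlib Require Import List Arith.

Definition finite_set {T : Type} (A : T -> Prop) : Prop :=
  exists l : list T, forall x, A x -> In x l.
Definition infinite_set {T : Type} (A : T -> Prop) : Prop := ~ finite_set A.

Definition strict_well_order {T : Type} (R : T -> T -> Prop) : Prop :=
  (forall x y z, R x y -> R y z -> R x z) /\
  (forall x y, R x y \/ x = y \/ R y x) /\
  well_founded R.

(* card_le_aleph k T  <->  |T| <= aleph_k.
   aleph_0: T injects into nat.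
   aleph_(k+1): T carries a well-order all of whose proper initial segments
   have cardinality <= aleph_k (i.e. order type <= omega_(k+1)). *)
Fixpoint card_le_aleph (k : nat) (T : Type) : Prop :=
  match k with
  | 0 => exists g : T -> nat, forall x y, g x = g y -> x = y
  | S k' => exists R : T -> T -> Prop, strict_well_order R /\
              forall x : T, card_le_aleph k' {y : T | R y x}
  end.

(* The partition property defining Theta_n for the "cardinal" T:
   every f : T^n -> omega is constant on some product of n infinite sets. *)
Definition Theta_property (n : nat) (T : Type) : Prop :=
  forall f : ({i : nat | i < n} -> T) -> nat,
    exists A : {i : nat | i < n} -> T -> Prop,
      (forall i, infinite_set (A i)) /\
      exists c : nat, forall x : {i : nat | i < n} -> T,
        (forall i, A i (x i)) -> f x = c.

From Stdlib Require Import List Arith Lia Classical ClassicalEpsilon FunctionalExtensionality.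
From Stdlib Require Cantor.

(* Induction on k: a set of size at most aleph_k admits a coloring of its
   (k+1)-tuples under which no product of infinite sets is monochromatic.
   For k = 0 color a tuple by the code of one coordinate.  For the step,
   well-order T so that every proper initial segment has size at most aleph_k,
   and color a tuple x by the index j of its largest coordinate together with
   the color of the other coordinates under a bad coloring of the segment
   below x_j.  If a product of infinite sets A_i were monochromatic, j would be
   constant on it; choosing lo < hi in A_j, every A_i with i <> j lies below lo,
   hence below hi, and the traces of these A_i on the segment below hi would
   form a monochromatic product for the coloring of that segment. *)

Notation Fin n := {i : nat | i < n}.

Definition no_homogeneous_product {I T : Type} (f : (I -> T) -> nat) : Prop :=
  forall A : I -> T -> Prop, (forall i, infinite_set (A i)) ->
  forall c, ~ (forall x, (forall i, A i (x i)) -> f x = c).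

Lemma proj1_sig_inj {X : Type} {P : X -> Prop} (u v : sig P) :
  proj1_sig u = proj1_sig v -> u = v.
Proof. apply eq_sig_hprop; intros; apply proof_irrelevance. Qed.

Lemma infinite_set_inhabited {T : Type} (A : T -> Prop) :
  infinite_set A -> exists y, A y.
Proof.
  intros HA; apply NNPP; intros Hno; apply HA.
  exists nil; intros y Hy; apply Hno; eauto.
Qed.

Lemma infinite_set_other {T : Type} (A : T -> Prop) (a : T) :
  infinite_set A -> exists b, A b /\ b <> a.
Proof.
  intros HA; apply NNPP; intros Hno; apply HA.
  exists (a :: nil); intros y Hy; left.
  apply NNPP; intros Hya; apply Hno; eauto.
Qed.

Lemma infinite_set_sig {T : Type} (P A : T -> Prop) :
  (forall y, A y -> P y) -> infinite_set A ->
  infinite_set (fun s : {y | P y} => A (proj1_sig s)).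
Proof.
  intros HAP HA [l Hl]; apply HA.
  exists (map (@proj1_sig _ _) l); intros y Hy.
  exact (in_map (@proj1_sig _ _) l (exist _ y (HAP y Hy)) (Hl (exist _ y (HAP y Hy)) Hy)).
Qed.

Lemma product_inhabited {I T : Type} (A : I -> T -> Prop) :
  (forall i, infinite_set (A i)) -> exists x, forall i, A i (x i).
Proof. intros HA; apply choice; intros i; apply infinite_set_inhabited, HA. Qed.

Definition glue {J T : Type} (j : J) (t : T) (z : {i | i <> j} -> T) (i : J) : T :=
  match excluded_middle_informative (i = j) with
  | left _ => t
  | right ne => z (exist _ i ne)
  end.

Lemma glue_at {J T : Type} (j : J) (t : T) z : glue j t z j = t.
Proof. unfold glue; destruct excluded_middle_informative; congruence. Qed.

Lemma glue_other {J T : Type} (j : J) (t : T) z (i : {i | i <> j}) :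
  glue j t z (proj1_sig i) = z i.
Proof.
  unfold glue; destruct excluded_middle_informative as [E|ne].
  - destruct (proj2_sig i E).
  - f_equal; apply proj1_sig_inj; reflexivity.
Qed.

Lemma glue_in_product {J T : Type} (A : J -> T -> Prop) (j : J) (t : T) z :
  A j t -> (forall i : {i | i <> j}, A (proj1_sig i) (z i)) ->
  forall i, A i (glue j t z i).
Proof.
  intros Ht Hz i; unfold glue.
  destruct excluded_middle_informative as [->|ne]; [exact Ht | exact (Hz (exist _ i ne))].
Qed.

Definition extend_coloring {I T : Type} (P : T -> Prop)
    (g : (I -> {y | P y}) -> nat) (y : I -> T) : nat :=
  match excluded_middle_informative (forall i, P (y i)) with
  | left H => g (fun i => exist P (y i) (H i))
  | right _ => 0
  end.

Lemma extend_coloring_sig {I T : Type} (P : T -> Prop) g (z : I -> {y | P y}) :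
  extend_coloring P g (fun i => proj1_sig (z i)) = g z.
Proof.
  unfold extend_coloring; destruct excluded_middle_informative as [H|H].
  - f_equal; apply functional_extensionality; intros i; apply proj1_sig_inj; reflexivity.
  - exfalso; apply H; intros i; exact (proj2_sig (z i)).
Qed.

Lemma no_homogeneous_product_comp {I J T : Type} (e : I -> J) (f : (I -> T) -> nat) :
  (forall i i', e i = e i' -> i = i') -> no_homogeneous_product f ->
  no_homogeneous_product (fun x : J -> T => f (fun i => x (e i))).
Proof.
  intros e_inj Hf A HA c Hc.
  destruct (product_inhabited A HA) as [x0 Hx0].
  apply (Hf (fun i => A (e i)) (fun i => HA (e i)) c); intros y Hy.
  set (x j := match excluded_middle_informative (exists i, e i = j) with
              | left h => y (proj1_sig (constructive_indefinite_description _ h))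
              | right _ => x0 j
              end).
  assert (Hxe : forall i, x (e i) = y i).
  { intros i; unfold x; destruct excluded_middle_informative as [h|h]; [|exfalso; eauto].
    destruct constructive_indefinite_description as [i' Hi']; simpl; f_equal; auto. }
  replace y with (fun i => x (e i)) by (apply functional_extensionality; exact Hxe).
  apply Hc; intros j; unfold x; destruct excluded_middle_informative as [h|h]; auto.
  destruct constructive_indefinite_description as [i' <-]; simpl; auto.
Qed.

Lemma no_homogeneous_product_coordinate {I T : Type} (g : T -> nat) (i0 : I) :
  (forall y y', g y = g y' -> y = y') ->
  no_homogeneous_product (fun x : I -> T => g (x i0)).
Proof.
  intros g_inj.
  refine (no_homogeneous_product_comp (fun _ : unit => i0) (fun x => g (x tt)) _ _).
  { intros [] []; reflexivity. }
  intros A HA c Hc.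
  destruct (infinite_set_inhabited _ (HA tt)) as [y0 Hy0].
  apply (HA tt); exists (y0 :: nil); intros y Hy; left; apply g_inj.
  rewrite (Hc (fun _ => y0)), (Hc (fun _ => y)); auto; intros []; auto.
Qed.

Lemma strict_well_order_irrefl {T : Type} (R : T -> T -> Prop) :
  strict_well_order R -> forall a, ~ R a a.
Proof.
  intros (_ & _ & R_wf) a; induction (R_wf a) as [a _ IH].
  intros Haa; exact (IH a Haa Haa).
Qed.

Lemma list_has_maximal {T : Type} (R : T -> T -> Prop) :
  strict_well_order R -> forall l : list T, l <> nil ->
  exists m, In m l /\ forall y, In y l -> ~ R m y.
Proof.
  intros R_wo; pose proof (strict_well_order_irrefl R R_wo) as R_irrefl.
  destruct R_wo as (R_trans & _ & _).
  induction l as [|a l IH]; intros Hne; [contradiction|].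
  destruct (classic (l = nil)) as [->|Hl].
  - exists a; split; [now left|]; intros y [<-|[]]; apply R_irrefl.
  - destruct (IH Hl) as (m & Hm & Hmax).
    destruct (classic (R m a)) as [Hma|Hma].
    + exists a; split; [now left|]; intros y [<-|Hy]; [apply R_irrefl|].
      intros Hay; exact (Hmax y Hy (R_trans _ _ _ Hma Hay)).
    + exists m; split; [now right|]; intros y [<-|Hy]; auto.
Qed.

Lemma exists_maximal_coordinate {I T : Type} (R : T -> T -> Prop) (x : I -> T) :
  strict_well_order R -> finite_set (fun _ : I => True) -> inhabited I ->
  exists j, forall i, ~ R (x j) (x i).
Proof.
  intros R_wo [l Hl] [i0].
  destruct (list_has_maximal R R_wo (map x l)) as (m & Hm & Hmax).
  - intros E; apply map_eq_nil in E; subst l; exact (Hl i0 Logic.I).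
  - apply in_map_iff in Hm as (j & <- & _).
    exists j; intros i; apply Hmax, in_map, Hl; trivial.
Qed.

Section Step.

Variables (J T : Type) (R : T -> T -> Prop) (code : J -> nat).
Hypothesis R_wo : strict_well_order R.
Hypothesis code_inj : forall i j, code i = code j -> i = j.

Variable color : forall (j : J) (a : T), ({i | i <> j} -> {y | R y a}) -> nat.
Hypothesis color_bad : forall j a, no_homogeneous_product (color j a).

Variable top : (J -> T) -> J.
Hypothesis top_max : forall x i, ~ R (x (top x)) (x i).

Definition local_color (x : J -> T) (j : J) : nat :=
  extend_coloring (fun y => R y (x j)) (color j (x j))
    (fun i : {i | i <> j} => x (proj1_sig i)).

Definition stepped_color (x : J -> T) : nat :=
  Cantor.to_nat (code (top x), local_color x (top x)).

Lemma stepped_color_constant_inv (A : J -> T -> Prop) c x0 :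
  (forall x, (forall i, A i (x i)) -> stepped_color x = c) ->
  (forall i, A i (x0 i)) ->
  forall x, (forall i, A i (x i)) ->
  top x = top x0 /\ local_color x (top x0) = local_color x0 (top x0).
Proof.
  intros Hc Hx0 x Hx.
  pose proof (f_equal Cantor.of_nat (eq_trans (Hc x Hx) (eq_sym (Hc x0 Hx0)))) as E.
  unfold stepped_color in E; rewrite !Cantor.cancel_of_to in E.
  injection E as Ecode Ecol; apply code_inj in Ecode.
  rewrite Ecode in Ecol; auto.
Qed.

Lemma stepped_color_bad : no_homogeneous_product stepped_color.
Proof.
  intros A HA c Hc.
  pose proof R_wo as (R_trans & R_total & _).
  destruct (product_inhabited A HA) as [x0 Hx0].
  pose proof (stepped_color_constant_inv A c x0 Hc Hx0) as Hconst.
  set (j := top x0) in Hconst |- *.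
  assert (exists lo hi, A j lo /\ A j hi /\ R lo hi) as (lo & hi & Hlo & Hhi & Hlohi).
  { destruct (infinite_set_other (A j) (x0 j) (HA j)) as (b & Hb & Hne).
    destruct (R_total b (x0 j)) as [H|[H|H]];
      [exists b, (x0 j) | contradiction | exists (x0 j), b]; auto. }
  assert (below : forall (i : {i | i <> j}) y, A (proj1_sig i) y -> R y hi).
  { intros i y Hy.
    set (x := glue j lo (fun i' => glue (proj1_sig i) y
                                     (fun i'' => x0 (proj1_sig i'')) (proj1_sig i'))).
    assert (Hx : forall i', A i' (x i')).
    { apply glue_in_product; [exact Hlo|]; intros i'.
      apply glue_in_product; auto. }
    destruct (Hconst x Hx) as [Htop _].
    pose proof (top_max x (proj1_sig i)) as Hmax.
    rewrite Htop in Hmax; unfold x in Hmax.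
    rewrite glue_at, glue_other, glue_at in Hmax.
    destruct (R_total y lo) as [H|[->|H]]; [eauto | exact Hlohi | contradiction]. }
  set (A' (i : {i | i <> j}) (s : {y | R y hi}) := A (proj1_sig i) (proj1_sig s)).
  apply (color_bad j hi A' (fun i => infinite_set_sig _ _ (below i) (HA _))
           (local_color x0 j)).
  intros z Hz.
  set (x := glue j hi (fun i => proj1_sig (z i))).
  assert (Hx : forall i, A i (x i)) by (apply glue_in_product; auto).
  assert (Hxj : x j = hi) by apply glue_at.
  assert (Hrestr : (fun i : {i | i <> j} => x (proj1_sig i)) = (fun i => proj1_sig (z i))).
  { apply functional_extensionality; intros i; exact (glue_other j hi _ i). }
  destruct (Hconst x Hx) as [_ Hcol].
  rewrite <- Hcol; unfold local_color.
  rewrite Hxj, Hrestr, extend_coloring_sig; reflexivity.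
Qed.

End Step.

Lemma no_homogeneous_product_of_segments {J T : Type}
    (R : T -> T -> Prop) (code : J -> nat) :
  strict_well_order R -> finite_set (fun _ : J => True) -> inhabited J ->
  (forall i j, code i = code j -> i = j) ->
  (forall (j : J) (a : T),
     exists g : ({i | i <> j} -> {y | R y a}) -> nat, no_homogeneous_product g) ->
  exists f : (J -> T) -> nat, no_homogeneous_product f.
Proof.
  intros R_wo J_fin J_inh code_inj Hseg.
  destruct (choice (fun x j => forall i, ~ R (x j) (x i))
              (fun x => exists_maximal_coordinate R x R_wo J_fin J_inh)) as [top top_max].
  set (color j a := proj1_sig (constructive_indefinite_description _ (Hseg j a))).
  exists (stepped_color J T R code color top).
  apply stepped_color_bad; auto.
  intros j a; exact (proj2_sig (constructive_indefinite_description _ (Hseg j a))).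
Qed.

Lemma Fin_finite (n : nat) : finite_set (fun _ : Fin (S n) => True).
Proof.
  exists (map (fun i => exist (fun i => i < S n) (Nat.min i n)
                          (proj2 (Nat.lt_succ_r _ _) (Nat.le_min_r i n)))
              (seq 0 (S n))).
  intros [i Hi] _; apply in_map_iff; exists i; split.
  - apply proj1_sig_inj; simpl; lia.
  - apply in_seq; lia.
Qed.

Lemma Fin_avoid_injection (k : nat) (j : Fin (S (S k))) :
  exists e : Fin (S k) -> {i | i <> j}, forall i i', e i = e i' -> i = i'.
Proof.
  set (m (i : Fin (S k)) := if proj1_sig i =? proj1_sig j then S k else proj1_sig i).
  assert (m_lt : forall i, m i < S (S k)).
  { intros [i Hi]; unfold m; simpl; destruct (_ =? _); lia. }
  assert (m_ne : forall i, exist _ (m i) (m_lt i) <> j).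
  { intros [i Hi] E; apply (f_equal (@proj1_sig _ _)) in E; revert E; unfold m; simpl.
    destruct (Nat.eqb_spec i (proj1_sig j)); destruct j; simpl in *; lia. }
  exists (fun i => exist _ (exist _ (m i) (m_lt i)) (m_ne i)).
  intros [i Hi] [i' Hi'] E; apply proj1_sig_inj; simpl.
  apply (f_equal (fun u => proj1_sig (proj1_sig u))) in E; revert E; unfold m; simpl.
  destruct (Nat.eqb_spec i (proj1_sig j)), (Nat.eqb_spec i' (proj1_sig j)); lia.
Qed.

Theorem no_homogeneous_product_of_card_le_aleph (k : nat) (T : Type) :
  card_le_aleph k T -> exists f : (Fin (S k) -> T) -> nat, no_homogeneous_product f.
Proof.
  revert T; induction k as [|k IH]; intros T HT.
  - destruct HT as [g g_inj].
    exists (fun x => g (x (exist _ 0 (Nat.lt_0_succ 0)))).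
    apply no_homogeneous_product_coordinate, g_inj.
  - destruct HT as (R & R_wo & Hseg).
    apply (no_homogeneous_product_of_segments R (@proj1_sig _ _)).
    + exact R_wo.
    + apply Fin_finite.
    + exact (inhabits (exist _ 0 (Nat.lt_0_succ _))).
    + apply proj1_sig_inj.
    + intros j a.
      destruct (IH _ (Hseg a)) as [g Hg].
      destruct (Fin_avoid_injection k j) as [e e_inj].
      exists (fun z => g (fun i => z (e i))).
      apply no_homogeneous_product_comp; assumption.
Qed.

Theorem corollary5p3 :
  forall n : nat, 1 <= n ->
  forall T : Type, card_le_aleph (n - 1) T -> ~ Theta_property n T.
Proof.
  intros n Hn T HT HTheta.
  destruct n as [|k]; [lia|].
  replace (S k - 1) with k in HT by lia.
  destruct (no_homogeneous_product_of_card_le_aleph k T HT) as [f Hf].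
  destruct (HTheta f) as (A & HA & c & Hc).
  exact (Hf A HA c Hc).
Qed.
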